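(* Let $V$ be a Banach $\mathbb O$-bimodule, $J\in\mathbb S$, and let $T=T_0+J\odot T_1$ and $S=S_0+J\odot S_1$ with $T_0,T_1,S_0,S_1\in\mathscr B_{\mathbb O}(V)$. Then $T\circ S=T\circledcirc S$. Consequently every such $T$ is power-associative, with $T^n=T^{\circledcirc n}$ for all $n$.
   Context: $\mathbb O$ is the real octonion algebra with basis $e_0=1,\dots,e_7$; $\mathbb S=\{J:J^2=-1\}$. An $\mathbb O$-bimodule is a real vector space $M$ with real-bilinear left and right multiplications by $\mathbb O$ (with $1x=x1=x$) whose associators $[p,q,x]=(pq)x-p(qx)$, $[p,x,q]=(px)q-p(xq)$, $[x,p,q]=(xp)q-x(pq)$ satisfy $[p,q,x]=[q,x,p]=[x,p,q]=-[q,p,x]$. $\operatorname{Re}M=\{m: pm=mp,\ [p,q,m]=0\ \forall p,q\}$; every $x=\sum_ix_ie_i$ uniquely with $x_i\in\operatorname{Re}M$, $\operatorname{Re}x:=x_0$. A Banach $\mathbb O$-bimodule has a complete norm with $\|px\|=\|xp\|=|p|\|x\|$. $B_p(f,x)=f(x)p-f(xp)$; $\mathscr B_{\mathcal{RO}}(V)$: bounded real-linear $f$ with $\operatorname{Re}B_p(f,x)=0$ for all $p,x$; $\mathscr B_{\mathbb O}(V)$: bounded octonionic linear operators ($f(xp)=f(x)p$). $(p\odot f)(x)=pf(x)+B_p(f,x)$. For $f,g\in\mathscr B_{\mathcal{RO}}(V)$, $f\circledcirc g=\operatorname{ext}((f\circ g)|_{\operatorname{Re}V})$ where $(\operatorname{ext}h)(\sum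 x_ie_i)=\sum h(x_i)e_i$ ($x_i\in\operatorname{Re}V$). $T^{\circledcirc n}=\operatorname{ext}(T^n|_{\operatorname{Re}V})$, $T^n$ the ordinary power. $T$ is power-associative if $T^n\in\mathscr B_{\mathcal{RO}}(V)$ for all $n$. *)

From HB Require Import structures.
From mathcomp Require Import all_boot all_order all_algebra.
From mathcomp Require Import all_classical all_reals all_analysis.
From Stdlib Require Import ClassicalEpsilon.
Set Implicit Arguments. Unset Strict Implicit. Unset Printing Implicit Defensive.
Import Order.TTheory GRing.Theory Num.Theory.
Import numFieldNormedType.Exports.
Local Open Scope ring_scope.

Definition Oct (R : realType) := 'rV[R]_8.

(* Multiplication table (Baez convention e_i e_{i+1} = e_{i+3}, indices mod 7):
   otab i j = (sign, k) means e_i e_j = sign * e_k. *)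
Definition otab_sign (d : nat) : bool := (* true = +, false = - *)
  (d == 1)%N || (d == 2)%N || (d == 4)%N.
Definition otab_off (d : nat) : nat :=
  match d with 1 => 3 | 2 => 6 | 3 => 1 | 4 => 5 | 5 => 4 | _ => 2 end%N.
Definition otab_idx (i j : nat) : nat :=
  if i == 0%N then j else if j == 0%N then i else if i == j then 0%N
  else ((i.-1 + otab_off ((j + 7 - i) %% 7)) %% 7).+1.
Definition otab_sgn (R : realType) (i j : nat) : R :=
  if i == 0%N then 1 else if j == 0%N then 1 else if i == j then -1
  else if otab_sign ((j + 7 - i) %% 7) then 1 else -1.

Definition oe (R : realType) (i : 'I_8) : Oct R := \row_k (if k == i then 1 else 0).
Definition oone (R : realType) : Oct R := oe R ord0.

Definition omul (R : realType) (p q : Oct R) : Oct R :=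
  \row_(k < 8) \sum_(i < 8) \sum_(j < 8)
     (if otab_idx i j == (k : nat) then otab_sgn R i j * p ord0 i * q ord0 j else 0).

Definition onorm (R : realType) (p : Oct R) : R := Num.sqrt (\sum_(i < 8) p ord0 i ^+ 2).

Definition OctS (R : realType) (J : Oct R) : Prop := omul J J = - oone R.

Section Bimod.
Variables (R : realType) (V : normedModType R).
Variables (lm : Oct R -> V -> V) (rm : V -> Oct R -> V).

Definition assoc_l (p q : Oct R) (x : V) : V := lm (omul p q) x - lm p (lm q x).
Definition assoc_m (p : Oct R) (x : V) (q : Oct R) : V := rm (lm p x) q - lm p (rm x q).
Definition assoc_r (x : V) (p q : Oct R) : V := rm (rm x p) q - rm x (omul p q).

Definition lm_bilinear : Prop :=
  [/\ (forall p q x, lm (p + q) x = lm p x + lm q x),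
      (forall (r : R) p x, lm (r *: p) x = r *: lm p x),
      (forall p x y, lm p (x + y) = lm p x + lm p y) &
      (forall (r : R) p x, lm p (r *: x) = r *: lm p x)].
Definition rm_bilinear : Prop :=
  [/\ (forall p q x, rm x (p + q) = rm x p + rm x q),
      (forall (r : R) p x, rm x (r *: p) = r *: rm x p),
      (forall p x y, rm (x + y) p = rm x p + rm y p) &
      (forall (r : R) p x, rm (r *: x) p = r *: rm x p)].

Definition is_Obimodule : Prop :=
  [/\ lm_bilinear, rm_bilinear,
      (forall x, lm (oone R) x = x /\ rm x (oone R) = x) &
      (forall p q x,
         assoc_l p q x = assoc_m q x p /\ assoc_m q x p = assoc_r x p q /\
         assoc_r x p q = - assoc_l q p x)].

Definition is_BanachObimodule : Prop :=
  [/\ is_Obimodule,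
      (forall p x, `|lm p x| = onorm p * `|x|) &
      (forall p x, `|rm x p| = onorm p * `|x|)].
(* completeness of the norm is imposed by taking V : completeNormedModType R *)

Definition ReV (m : V) : Prop :=
  (forall p, lm p m = rm m p) /\ (forall p q, assoc_l p q m = 0).

Definition is_decomp (x : V) (c : 'I_8 -> V) : Prop :=
  (forall i, ReV (c i)) /\ x = \sum_(i < 8) rm (c i) (oe R i).

(* the (unique, by the standing facts) components x_i *)
Definition ocomp (x : V) : 'I_8 -> V :=
  epsilon (inhabits (fun _ : 'I_8 => (0 : V))) (is_decomp x).

Definition ReOf (x : V) : V := ocomp x ord0.

Definition oext (h : V -> V) (x : V) : V :=
  \sum_(i < 8) rm (h (ocomp x i)) (oe R i).

Definition Bp (p : Oct R) (f : V -> V) (x : V) : V := rm (f x) p - f (rm x p).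

Definition real_linear (f : V -> V) : Prop :=
  (forall x y, f (x + y) = f x + f y) /\ (forall (r : R) x, f (r *: x) = r *: f x).
Definition bounded_op (f : V -> V) : Prop :=
  exists M : R, forall x, `|f x| <= M * `|x|.

Definition B_RO (f : V -> V) : Prop :=
  [/\ real_linear f, bounded_op f & forall p x, ReOf (Bp p f x) = 0].

Definition B_O (f : V -> V) : Prop :=
  [/\ real_linear f, bounded_op f & forall x p, f (rm x p) = rm (f x) p].

Definition odot (p : Oct R) (f : V -> V) : V -> V := fun x => lm p (f x) + Bp p f x.

(* f ⊚ g = ext((f ∘ g)|_{Re V}) *)
Definition ocirc (f g : V -> V) : V -> V := oext (f \o g).

Definition opow (T : V -> V) (n : nat) : V -> V := oext (iter n T).

Definition power_associative (T : V -> V) : Prop := forall n, B_RO (iter n T).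

End Bimod.

(* Octonionic linear operators preserve Re V: if u is real, f u associates on the
   right with all octonions, and since the nucleus of O is R such an element of V is
   real.  Hence they commute with left multiplications and, as J (J y) = - y by
   alternativity, the operators x |-> A x + J (B x) with A, B octonionic linear form
   an algebra; it contains T = T0 + J ⊙ T1 because B_J(T1, -) = 0.  Such an operator
   maps x = Σ x_i e_i to Σ (A x_i + J (B x_i)) e_i, i.e. it is the extension of its
   restriction to Re V, which gives T ∘ S = T ⊚ S and T^n = T^⊚n.  Finally
   B_p(T, x) is the associator (J y) p - J (y p) with y = B x, whose real part
   vanishes because octonion associators are purely imaginary. *)

From Pilot Require Import Defs.
From HB Require Import structures.
From mathcomp Require Import all_boot all_order all_algebra.
From mathcomp Require Import all_classical all_reals all_analysis.
From Stdlib Require Import ClassicalEpsilon.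
Set Implicit Arguments. Unset Strict Implicit. Unset Printing Implicit Defensive.
Import Order.TTheory GRing.Theory Num.Theory.
Import numFieldNormedType.Exports.
Local Open Scope ring_scope.

(* [otab_sgn] with integer values, so that the multiplication table can be checked
   by computation. *)
Definition otab_sgnz (i j : nat) : int :=
  if i == 0%N then 1 else if j == 0%N then 1 else if i == j then -1
  else if otab_sign ((j + 7 - i) %% 7) then 1 else -1.

Definition oassoc_coef (i j k l : nat) : int :=
  otab_sgnz i j * otab_sgnz (otab_idx i j) k * (otab_idx (otab_idx i j) k == l)%:R
  - otab_sgnz j k * otab_sgnz i (otab_idx j k) * (otab_idx i (otab_idx j k) == l)%:R.

Definition forall8 (P : pred nat) := all P (iota 0 8).
Definition exists8 (P : pred nat) := has P (iota 0 8).

Lemma forall8P (P : pred nat) : forall8 P -> forall i : 'I_8, P i.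
Proof. by move=> /allP HP i; apply: HP; rewrite mem_iota ltn_ord. Qed.

Lemma exists8P (P : pred nat) : exists8 P -> exists i : 'I_8, P i.
Proof. by case/hasP=> i; rewrite mem_iota add0n => lti8 Pi; exists (Ordinal lti8). Qed.

Lemma otab_idx_lt : forall8 (fun i => forall8 (fun j => otab_idx i j < 8)%N).
Proof. by vm_compute. Qed.

Lemma oassoc_coef_real :
  forall8 (fun i => forall8 (fun j => forall8 (fun k => oassoc_coef i j k 0 == 0))).
Proof. by vm_compute. Qed.

(* Each e_j, j <> 0, is isolated by some coefficient of the associators
   [e_i, e_a, e_b]: this is what makes R the nucleus of O. *)
Lemma oassoc_coef_nucleus : forall8 (fun j => (j != 0)%N ==>
  exists8 (fun a => exists8 (fun b => exists8 (fun k =>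
    forall8 (fun i => (oassoc_coef i a b k != 0) == (i == j)))))).
Proof. by vm_compute. Qed.

Definition oidx (i j : 'I_8) : 'I_8 := inord (otab_idx i j).

Lemma oidxE (i j : 'I_8) : oidx i j = otab_idx i j :> nat.
Proof. by rewrite inordK // (forall8P (forall8P otab_idx_lt i)). Qed.

Section Octonions.
Variable R : realType.
Implicit Types p q r : Oct R.

Definition oassoc p q r : Oct R := omul (omul p q) r - omul p (omul q r).

Lemma omulDl q : {morph (fun p => omul p q) : p1 p2 / p1 + p2}.
Proof.
move=> p1 p2; apply/rowP => k; rewrite !mxE -big_split; apply: eq_bigr => i _.
rewrite -big_split; apply: eq_bigr => j _; rewrite !mxE.
by case: (otab_idx i j == k) => /=; rewrite ?addr0 // mulrDr mulrDl.
Qed.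

Lemma omulDr p : {morph (fun q => omul p q) : q1 q2 / q1 + q2}.
Proof.
move=> q1 q2; apply/rowP => k; rewrite !mxE -big_split; apply: eq_bigr => i _.
rewrite -big_split; apply: eq_bigr => j _; rewrite !mxE.
by case: (otab_idx i j == k) => /=; rewrite ?addr0 // mulrDr.
Qed.

Lemma omulZl (a : R) p q : omul (a *: p) q = a *: omul p q.
Proof.
apply/rowP => k; rewrite !mxE mulr_sumr; apply: eq_bigr => i _.
rewrite mulr_sumr; apply: eq_bigr => j _; rewrite !mxE.
by case: (otab_idx i j == k) => /=; rewrite ?mulr0 // !mulrA [_ * a]mulrC.
Qed.

Lemma omulZr (a : R) p q : omul p (a *: q) = a *: omul p q.
Proof.
apply/rowP => k; rewrite !mxE mulr_sumr; apply: eq_bigr => i _.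
rewrite mulr_sumr; apply: eq_bigr => j _; rewrite !mxE.
by case: (otab_idx i j == k) => /=; rewrite ?mulr0 // mulrCA.
Qed.

Lemma oe_expand p : p = \sum_(k < 8) p ord0 k *: oe R k.
Proof.
apply/rowP => k; rewrite summxE (bigD1 k) //= big1 ?addr0 => [|i ik].
  by rewrite !mxE eqxx mulr1.
by rewrite !mxE eq_sym (negbTE ik) mulr0.
Qed.

Lemma otab_sgnE (i j : nat) : otab_sgn R i j = (otab_sgnz i j)%:~R.
Proof. by rewrite /otab_sgn /otab_sgnz; do 4 case: ifP => _ //=; rewrite rmorphN. Qed.

Lemma omul_oe (i j : 'I_8) : omul (oe R i) (oe R j) = (otab_sgnz i j)%:~R *: oe R (oidx i j).
Proof.
apply/rowP => k; rewrite !mxE (bigD1 i) //= [X in _ + X]big1 ?addr0 => [|i' i'i]; last first.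
  apply: big1 => j' _; rewrite !mxE (negbTE i'i).
  by case: (otab_idx i' j' == k); rewrite ?mulr0 ?mul0r.
rewrite (bigD1 j) //= [X in _ + X]big1 ?addr0 => [|j' j'j]; last first.
  by rewrite !mxE (negbTE j'j); case: (otab_idx i j' == k); rewrite ?mulr0.
rewrite !mxE !eqxx !mulr1 otab_sgnE -val_eqE /= oidxE.
by rewrite (eq_sym (k : nat)); case: (otab_idx i j == k); rewrite ?mulr1 ?mulr0.
Qed.

Lemma oassoc_oeE (i a b k : 'I_8) :
  oassoc (oe R i) (oe R a) (oe R b) ord0 k = (oassoc_coef i a b k)%:~R.
Proof.
rewrite /oassoc !(omul_oe, omulZl, omulZr) !scalerA !mxE -!val_eqE /= !oidxE.
rewrite /oassoc_coef rmorphB !rmorphM /= !rmorph_nat !(eq_sym (k : nat)).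
by case: (otab_idx (otab_idx i a) b == k); case: (otab_idx i (otab_idx a b) == k).
Qed.

Lemma linear_oe_coef_eq0 (f : Oct R -> Oct R) (k : 'I_8) :
    {morph f : p1 p2 / p1 + p2} -> (forall (a : R) p, f (a *: p) = a *: f p) ->
  (forall i, f (oe R i) ord0 k = 0) -> forall p, f p ord0 k = 0.
Proof.
move=> fD fZ f_oe p; have f0 : f 0 = 0 by have := fZ 0 0; rewrite !scale0r.
rewrite (oe_expand p) (big_morph f fD f0) summxE big1 // => i _.
by rewrite fZ mxE f_oe mulr0.
Qed.

Lemma oassoc_real p q r : oassoc p q r ord0 ord0 = 0.
Proof.
move: p; apply: (@linear_oe_coef_eq0 (fun p => oassoc p q r)) => [p1 p2|a p|i] /=.
- by rewrite /oassoc !omulDl opprD addrACA.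
- by rewrite /oassoc !omulZl -scalerBr.
move: q; apply: (@linear_oe_coef_eq0 (fun q => oassoc (oe R i) q r)) => [q1 q2|a q|j] /=.
- by rewrite /oassoc omulDr omulDl omulDl omulDr opprD addrACA.
- by rewrite /oassoc omulZr omulZl omulZl omulZr -scalerBr.
move: r; apply: (@linear_oe_coef_eq0 (oassoc (oe R i) (oe R j))) => [r1 r2|a r|k] /=.
- by rewrite /oassoc !omulDr opprD addrACA.
- by rewrite /oassoc !omulZr -scalerBr.
rewrite oassoc_oeE.
by have /eqP -> := forall8P (forall8P (forall8P oassoc_coef_real i) j) k.
Qed.

End Octonions.

Section Additive.
Variables (U W : zmodType) (f : U -> W).
Hypothesis fD : {morph f : x y / x + y}.

Lemma morph_add0 : f 0 = 0.
Proof. by apply: (addrI (f 0)); rewrite -fD !addr0. Qed.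

Lemma morph_addN x : f (- x) = - f x.
Proof. by apply/eqP; rewrite -subr_eq0 opprK -fD addNr morph_add0. Qed.

Lemma morph_add_sum (I : Type) (s : seq I) (P : pred I) (F : I -> U) :
  f (\sum_(i <- s | P i) F i) = \sum_(i <- s | P i) f (F i).
Proof. exact: (big_morph f fD morph_add0). Qed.

End Additive.

Section Bimodule.
Variables (R : realType) (V : normedModType R).
Variables (lm : Oct R -> V -> V) (rm : V -> Oct R -> V).
Hypothesis Hbim : is_Obimodule lm rm.

Local Notation ReV := (Defs.ReV lm rm).
Local Notation ocomp := (Defs.ocomp lm rm).
Local Notation is_decomp := (Defs.is_decomp lm rm).

Lemma lmxD p : {morph lm p : x y / x + y}.
Proof. by case: Hbim => -[_ _ Hl _] _ _ _; apply: Hl. Qed.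
Lemma lmxZ (a : R) p x : lm p (a *: x) = a *: lm p x.
Proof. by case: Hbim => -[_ _ _ Hl] _ _ _; apply: Hl. Qed.
Lemma rmD x : {morph rm x : p q / p + q}.
Proof. by case: Hbim => _ [Hr _ _ _] _ _ p q; apply: Hr. Qed.
Lemma rmZ (a : R) p x : rm x (a *: p) = a *: rm x p.
Proof. by case: Hbim => _ [_ Hr _ _] _ _; apply: Hr. Qed.
Lemma rmxD p x y : rm (x + y) p = rm x p + rm y p.
Proof. by case: Hbim => _ [_ _ Hr _]. Qed.
Lemma rmxZ (a : R) p x : rm (a *: x) p = a *: rm x p.
Proof. by case: Hbim => _ [_ _ _ Hr] _ _; apply: Hr. Qed.
Lemma lmZ (a : R) p x : lm (a *: p) x = a *: lm p x.
Proof. by case: Hbim => -[_ Hl _ _]. Qed.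
Lemma lm1 x : lm (oone R) x = x.
Proof. by case: Hbim => _ _ /(_ x) []. Qed.
Lemma rm1 x : rm x (oone R) = x.
Proof. by case: Hbim => _ _ /(_ x) []. Qed.

Lemma assoc_l_m p q x : assoc_l lm p q x = assoc_m lm rm q x p.
Proof. by case: Hbim => _ _ _ /(_ p q x) []. Qed.
Lemma assoc_m_r p q x : assoc_m lm rm q x p = assoc_r rm x p q.
Proof. by case: Hbim => _ _ _ /(_ p q x) [_ []]. Qed.
Lemma assoc_r_l p q x : assoc_r rm x p q = - assoc_l lm q p x.
Proof. by case: Hbim => _ _ _ /(_ p q x) [_ []]. Qed.

Lemma lm_alt p x : lm p (lm p x) = lm (omul p p) x.
Proof.
have Al0 : assoc_l lm p p x = 0.
  have Al : assoc_l lm p p x = - assoc_l lm p p x.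
    by rewrite [LHS]assoc_l_m assoc_m_r assoc_r_l.
  have /eqP : (2%:R : R) *: assoc_l lm p p x = 0 by rewrite scaler_nat mulr2n {1}Al addNr.
  by rewrite scaler_eq0 pnatr_eq0 => /eqP.
by apply/esym/subr0_eq; exact: Al0.
Qed.

Lemma OctS_lm_lm J x : OctS J -> lm J (lm J x) = - x.
Proof. by move=> JJ; rewrite lm_alt JJ -scaleN1r lmZ lm1 scaleN1r. Qed.

Lemma lm_sum p (I : Type) (s : seq I) (P : pred I) (F : I -> V) :
  lm p (\sum_(i <- s | P i) F i) = \sum_(i <- s | P i) lm p (F i).
Proof. exact: (morph_add_sum (lmxD p)). Qed.

Lemma rmx0 p : rm 0 p = 0.
Proof. exact: (@morph_add0 _ _ (rm^~ p) (rmxD p)). Qed.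

Lemma rmxN p x : rm (- x) p = - rm x p.
Proof. exact: (@morph_addN _ _ (rm^~ p) (rmxD p)). Qed.

Lemma rm_suml p (I : Type) (s : seq I) (P : pred I) (F : I -> V) :
  rm (\sum_(i <- s | P i) F i) p = \sum_(i <- s | P i) rm (F i) p.
Proof. exact: (@morph_add_sum _ _ (rm^~ p) (rmxD p)). Qed.

Lemma rm_sumr x (I : Type) (s : seq I) (P : pred I) (F : I -> Oct R) :
  rm x (\sum_(i <- s | P i) F i) = \sum_(i <- s | P i) rm x (F i).
Proof. exact: (morph_add_sum (rmD x)). Qed.

Lemma rmB x p q : rm x (p - q) = rm x p - rm x q.
Proof. by rewrite rmD (morph_addN (rmD x)). Qed.

Lemma rm_oe_expand x p : rm x p = \sum_(k < 8) rm (p ord0 k *: x) (oe R k).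
Proof. by rewrite {1}(oe_expand p) rm_sumr; apply: eq_bigr => k _; rewrite rmZ rmxZ. Qed.

Lemma ReV_rmA u p q : ReV u -> rm (rm u p) q = rm u (omul p q).
Proof.
case=> _ Hu; apply/eqP; rewrite -subr_eq0 -[_ - _]/(assoc_r rm u p q).
by rewrite -assoc_m_r -assoc_l_m Hu.
Qed.

Lemma ReV_lm_rm u p q : ReV u -> lm p (rm u q) = rm u (omul p q).
Proof.
case=> uC Hu; rewrite -uC -[RHS]uC; apply/esym/eqP; rewrite -subr_eq0.
by rewrite -[_ - _]/(assoc_l lm p q u) Hu.
Qed.

Lemma ReV_lm_rmA u p q : ReV u -> lm p (rm u q) = rm (lm p u) q.
Proof.
by move=> uRe; rewrite (ReV_lm_rm _ _ uRe); case: (uRe) => -> _; rewrite (ReV_rmA _ _ uRe).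
Qed.

Lemma ReV0 : ReV 0.
Proof.
split=> [p|p q]; first by rewrite (morph_add0 (lmxD p)) (rmx0 p).
by rewrite /assoc_l !(morph_add0 (lmxD _)) subr0.
Qed.

Lemma ReVD u v : ReV u -> ReV v -> ReV (u + v).
Proof.
case=> uC uA [vC vA]; split=> [p|p q]; first by rewrite lmxD rmxD uC vC.
rewrite /assoc_l !lmxD opprD addrACA -/(assoc_l lm p q u) -/(assoc_l lm p q v).
by rewrite uA vA addr0.
Qed.

Lemma ReVZ (a : R) u : ReV u -> ReV (a *: u).
Proof.
case=> uC uA; split=> [p|p q]; first by rewrite lmxZ rmxZ uC.
by rewrite /assoc_l !lmxZ -scalerBr -/(assoc_l lm p q u) uA scaler0.
Qed.

Lemma ReV_sum (I : Type) (s : seq I) (P : pred I) (F : I -> V) :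
  (forall i, P i -> ReV (F i)) -> ReV (\sum_(i <- s | P i) F i).
Proof. by move=> FRe; apply: big_ind => //; [exact: ReV0 | exact: ReVD]. Qed.

Lemma is_decomp_sum_rm (w : 'I_8 -> V) (o : 'I_8 -> Oct R) : (forall i, ReV (w i)) ->
  is_decomp (\sum_(i < 8) rm (w i) (o i)) (fun k => \sum_(i < 8) o i ord0 k *: w i).
Proof.
move=> wRe; split=> [k|]; first by apply: ReV_sum => i _; apply: ReVZ.
under eq_bigr do rewrite rm_oe_expand.
by rewrite exchange_big; apply: eq_bigr => k _; rewrite rm_suml.
Qed.

Lemma bounded_op_ge0 (f : V -> V) :
  bounded_op f -> exists2 M : R, 0 <= M & forall x, `|f x| <= M * `|x|.
Proof.
case=> M fM; exists `|M| => // x; apply: le_trans (fM x) _.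
by apply: ler_wpM2r => //; exact: ler_norm.
Qed.

Section OctonionLinear.
Variable f : V -> V.
Hypothesis fO : B_O rm f.

Lemma B_O_D : {morph f : x y / x + y}.
Proof. by case: fO => -[]. Qed.
Lemma B_O_Z (a : R) x : f (a *: x) = a *: f x.
Proof. by case: fO => -[]. Qed.
Lemma B_O_rm x p : f (rm x p) = rm (f x) p.
Proof. by case: fO. Qed.
Lemma B_O_sum (I : Type) (s : seq I) (P : pred I) (F : I -> V) :
  f (\sum_(i <- s | P i) F i) = \sum_(i <- s | P i) f (F i).
Proof. exact: (morph_add_sum B_O_D). Qed.

Lemma Bp_B_O p x : Bp rm p f x = 0.
Proof. by rewrite /Bp B_O_rm subrr. Qed.

End OctonionLinear.

Lemma B_O_id : B_O rm id.
Proof. by split=> //; exists 1 => x; rewrite mul1r. Qed.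

Lemma B_O_0 : B_O rm (fun=> 0).
Proof.
split=> [|| x p]; last by rewrite (rmx0 p).
  by split=> [x y|a x]; rewrite ?addr0 ?scaler0.
by exists 0 => x; rewrite normr0 mul0r.
Qed.

Lemma B_O_comp f g : B_O rm f -> B_O rm g -> B_O rm (f \o g).
Proof.
move=> fO gO; split=> [|| x p /=]; last by rewrite !B_O_rm.
  by split=> [x y|a x] /=; rewrite ?(B_O_D fO, B_O_D gO, B_O_Z fO, B_O_Z gO).
case: fO gO => _ /bounded_op_ge0 [Mf Mf0 fM] _ [_ /bounded_op_ge0 [Mg _ gM] _].
exists (Mf * Mg) => x /=; apply: le_trans (fM _) _.
by rewrite -mulrA ler_wpM2l.
Qed.

Lemma B_O_add f g : B_O rm f -> B_O rm g -> B_O rm (fun x => f x + g x).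
Proof.
move=> fO gO; split=> [|| x p]; last by rewrite (B_O_rm fO) (B_O_rm gO) rmxD.
  split=> [x y|a x]; first by rewrite (B_O_D fO) (B_O_D gO) addrACA.
  by rewrite (B_O_Z fO) (B_O_Z gO) scalerDr.
case: fO gO => _ /bounded_op_ge0 [Mf _ fM] _ [_ /bounded_op_ge0 [Mg _ gM] _].
exists (Mf + Mg) => x; apply: le_trans (ler_normD _ _) _.
by rewrite mulrDl lerD.
Qed.

Lemma B_O_sub f g : B_O rm f -> B_O rm g -> B_O rm (fun x => f x - g x).
Proof.
move=> fO gO; split=> [|| x p]; last by rewrite (B_O_rm fO) (B_O_rm gO) rmxD rmxN.
  split=> [x y|a x]; first by rewrite (B_O_D fO) (B_O_D gO) opprD addrACA.
  by rewrite (B_O_Z fO) (B_O_Z gO) scalerBr.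
case: fO gO => _ /bounded_op_ge0 [Mf _ fM] _ [_ /bounded_op_ge0 [Mg _ gM] _].
exists (Mf + Mg) => x; apply: le_trans (ler_normB _ _) _.
by rewrite mulrDl lerD.
Qed.

(* The operators T0 + J ⊙ T1 of the theorem, in the form x |-> T0 x + J (T1 x)
   they take by [Bp_B_O]. *)
Definition slice_op (J : Oct R) (f : V -> V) : Prop :=
  exists A B, [/\ B_O rm A, B_O rm B & forall x, f x = A x + lm J (B x)].

Lemma slice_op_odot J A B :
  B_O rm A -> B_O rm B -> slice_op J (fun x => A x + odot lm rm J B x).
Proof. by move=> AO BO; exists A, B; split=> // x; rewrite /odot Bp_B_O // addr0. Qed.

Section Decomposition.
Hypothesis Hdec : forall x : V, exists! c : 'I_8 -> V, is_decomp x c.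

Lemma ocompP x : is_decomp x (ocomp x).
Proof. by apply: epsilon_spec; have [c [Hc _]] := Hdec x; exists c. Qed.

Lemma ocomp_uniq x c : is_decomp x c -> ocomp x = c.
Proof. by move=> xc; have [c0 [_ U]] := Hdec x; rewrite -(U _ xc) -(U _ (ocompP x)). Qed.

Lemma ocomp_ReV x i : ReV (ocomp x i).
Proof. by case: (ocompP x). Qed.

Lemma ocompE x : x = \sum_(i < 8) rm (ocomp x i) (oe R i).
Proof. by case: (ocompP x). Qed.

Lemma ocomp_sum_rm (w : 'I_8 -> V) (o : 'I_8 -> Oct R) k : (forall i, ReV (w i)) ->
  ocomp (\sum_(i < 8) rm (w i) (o i)) k = \sum_(i < 8) o i ord0 k *: w i.
Proof. by move=> wRe; rewrite (ocomp_uniq (is_decomp_sum_rm o wRe)). Qed.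

Lemma ocomp0 k : ocomp 0 k = 0.
Proof.
rewrite (@ocomp_uniq 0 (fun=> 0)) //; split=> [_|]; first exact: ReV0.
by rewrite big1 // => i _; rewrite rmx0.
Qed.

Lemma rm_assoc_ocomp m p q :
  rm (rm m p) q - rm m (omul p q) = \sum_(i < 8) rm (ocomp m i) (oassoc (oe R i) p q).
Proof.
rewrite {1 2}(ocompE m) !rm_suml -sumrB; apply: eq_bigr => i _.
have wRe := ocomp_ReV m i.
by rewrite rmB !(ReV_rmA _ _ wRe).
Qed.

Lemma lm_rm_assoc_ocomp q y p :
  rm (lm q y) p - lm q (rm y p) = \sum_(i < 8) rm (ocomp y i) (oassoc q (oe R i) p).
Proof.
rewrite {1 2}(ocompE y) !lm_sum !rm_suml lm_sum -sumrB; apply: eq_bigr => i _.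
have wRe := ocomp_ReV y i.
by rewrite rmB (ReV_lm_rm _ _ wRe) !(ReV_rmA _ _ wRe) (ReV_lm_rm _ _ wRe).
Qed.

Lemma ReOf_lm_rm_assoc q y p : ReOf lm rm (rm (lm q y) p - lm q (rm y p)) = 0.
Proof.
rewrite /ReOf lm_rm_assoc_ocomp ocomp_sum_rm; last exact: ocomp_ReV.
by rewrite big1 // => i _; rewrite oassoc_real scale0r.
Qed.

Lemma ReV_of_rm_assoc m : (forall p q, rm (rm m p) q = rm m (omul p q)) -> ReV m.
Proof.
move=> mA; set w := ocomp m.
have coef0 (a b k : 'I_8) : \sum_(i < 8) (oassoc_coef i a b k)%:~R *: w i = 0.
  have := ocomp_sum_rm (fun i => oassoc (oe R i) (oe R a) (oe R b)) k (@ocomp_ReV m).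
  rewrite -rm_assoc_ocomp mA subrr ocomp0 => E; rewrite [RHS]E.
  by apply: eq_bigr => i _; rewrite oassoc_oeE.
have w0 (j : 'I_8) : j != ord0 -> w j = 0.
  move=> j0; have := forall8P oassoc_coef_nucleus j; rewrite j0 /=.
  case/exists8P=> a /exists8P [b /exists8P [k /forall8P coefj]].
  have := coef0 a b k; rewrite (bigD1 j) //= big1 ?addr0 => [|i ij]; last first.
    have := coefj i; rewrite (negbTE (ij : (i : nat) != j)) => /eqP/negbFE/eqP ->.
    by rewrite scale0r.
  move/eqP; rewrite scaler_eq0 intr_eq0 => /orP[/eqP coef_j0|/eqP //].
  by have := coefj j; rewrite coef_j0 !eqxx.
have -> : m = w ord0.
  rewrite {1}(ocompE m) (bigD1 ord0) //= big1 ?addr0 ?rm1 // => i i0.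
  by rewrite -/w w0 // rmx0.
exact: ocomp_ReV.
Qed.

Lemma B_O_ReV f u : B_O rm f -> ReV u -> ReV (f u).
Proof.
by move=> fO uRe; apply: ReV_of_rm_assoc => p q; rewrite -!(B_O_rm fO) (ReV_rmA _ _ uRe).
Qed.

Lemma B_O_lm f p x : B_O rm f -> f (lm p x) = lm p (f x).
Proof.
move=> fO; rewrite (ocompE x) lm_sum !(B_O_sum fO) lm_sum; apply: eq_bigr => i _.
have wRe := ocomp_ReV x i.
by rewrite (B_O_rm fO) (ReV_lm_rm _ _ wRe) (B_O_rm fO) (ReV_lm_rm _ _ (B_O_ReV fO wRe)).
Qed.

Section Slice.
Variable J : Oct R.

Lemma slice_op_id : slice_op J id.
Proof.
exists id, (fun=> 0); split=> [||x]; [exact: B_O_id | exact: B_O_0 |].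
by rewrite (morph_add0 (lmxD J)) addr0.
Qed.

Lemma slice_op_comp f g : OctS J -> slice_op J f -> slice_op J g -> slice_op J (f \o g).
Proof.
move=> JJ [A [B [AO BO fE]]] [C [D [CO DO gE]]].
exists (fun x => A (C x) - B (D x)), (fun x => A (D x) + B (C x)); split.
- by apply: B_O_sub; apply: B_O_comp.
- by apply: B_O_add; apply: B_O_comp.
move=> x /=; rewrite fE gE (B_O_D AO) (B_O_D BO) !(B_O_lm _ _ AO) !(B_O_lm _ _ BO).
by rewrite !lmxD OctS_lm_lm // [lm J (B _) - _]addrC addrACA.
Qed.

Lemma slice_op_iter f n : OctS J -> slice_op J f -> slice_op J (iter n f).
Proof.
move=> JJ sf; elim: n => [|n IHn]; first exact: slice_op_id.
exact: (slice_op_comp JJ sf IHn).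
Qed.

Lemma slice_op_oext f : slice_op J f -> f = oext lm rm f.
Proof.
move=> [A [B [AO BO fE]]]; apply: funext => x; rewrite /oext fE.
under [RHS]eq_bigr do rewrite fE rmxD.
rewrite big_split {1 2}(ocompE x) (B_O_sum AO) (B_O_sum BO) lm_sum /=.
congr (_ + _); apply: eq_bigr => i _; rewrite ?(B_O_rm AO) ?(B_O_rm BO) //.
by rewrite (ReV_lm_rmA _ _ (B_O_ReV BO (ocomp_ReV x i))).
Qed.

Lemma slice_op_B_RO f : (forall p x, `|lm p x| = onorm p * `|x|) ->
  slice_op J f -> B_RO lm rm f.
Proof.
move=> lm_norm [A [B [AO BO fE]]]; split.
- split=> [x y|a x]; rewrite !fE.
    by rewrite (B_O_D AO) (B_O_D BO) lmxD addrACA.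
  by rewrite (B_O_Z AO) (B_O_Z BO) lmxZ scalerDr.
- case: AO BO => _ /bounded_op_ge0 [MA _ AM] _ [_ /bounded_op_ge0 [MB MB0 BM] _].
  exists (MA + onorm J * MB) => x; rewrite fE; apply: le_trans (ler_normD _ _) _.
  rewrite lm_norm mulrDl -mulrA lerD // ler_wpM2l //.
  exact: sqrtr_ge0.
- move=> p x; rewrite /Bp !fE (B_O_rm AO) (B_O_rm BO) rmxD opprD addrACA subrr add0r.
  exact: ReOf_lm_rm_assoc.
Qed.

End Slice.

End Decomposition.

End Bimodule.

Theorem mainTheorem16 (R : realType) (V : completeNormedModType R)
  (lm : Oct R -> V -> V) (rm : V -> Oct R -> V)
  (HV : is_BanachObimodule lm rm)
  (Hdec : forall x : V, exists! c : 'I_8 -> V, is_decomp lm rm x c)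
  (J : Oct R) (HJ : OctS J)
  (T0 T1 S0 S1 : V -> V)
  (hT0 : B_O rm T0) (hT1 : B_O rm T1) (hS0 : B_O rm S0) (hS1 : B_O rm S1) :
  let T := fun x => T0 x + odot lm rm J T1 x in
  let S := fun x => S0 x + odot lm rm J S1 x in
  (T \o S = ocirc lm rm T S) /\
  (power_associative lm rm T /\ forall n : nat, iter n T = opow lm rm T n).
Proof.
move=> T S; case: HV => Hbim lm_norm _.
have sT : slice_op lm rm J T := slice_op_odot lm J hT0 hT1.
have sS : slice_op lm rm J S := slice_op_odot lm J hS0 hS1.
have sTn n : slice_op lm rm J (iter n T) := slice_op_iter Hbim Hdec n HJ sT.
split; last split.
- by rewrite /ocirc -(slice_op_oext Hbim Hdec (slice_op_comp Hbim Hdec HJ sT sS)).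
- by move=> n; exact: (slice_op_B_RO Hbim Hdec lm_norm (sTn n)).
- by move=> n; rewrite /opow -(slice_op_oext Hbim Hdec (sTn n)).
Qed.
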